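(* Let $\mathcal{A},\mathcal{B}$ be Hilbert spaces with $\dim\mathcal{A}=m$, $\dim\mathcal{B}=n$, $2\le m\le n$, with computational bases $\{|j\rangle\}$. Let $S=\operatorname{span}\{|j\rangle|k+1\rangle-|j+1\rangle|k\rangle : 0\le j\le m-2,\ 0\le k\le n-2\}\subseteq\mathcal{A}\otimes\mathcal{B}$. Then the orthogonal complement $S^\perp$ is strongly PPT-unextendible.
   Context: A bipartite positive semidefinite operator $E$ is PPT if its partial transpose $E^{T_B}$ (defined by $(|i\rangle\langle k|\otimes|j\rangle\langle l|)^{T_B}=|i\rangle\langle k|\otimes|l\rangle\langle j|$) is positive semidefinite. A subspace $V\subseteq\mathcal{A}\otimes\mathcal{B}$ is PPT-extendible if there exists a nonzero PPT operator whose support is contained in $V^\perp$; $V$ is strongly PPT-unextendible if for every positive integer $k$, $V^{\otimes k}\subseteq\mathcal{A}^{\otimes k}\otimes\mathcal{B}^{\otimes k}$ is not PPT-extendible (with respect to the bipartition $\mathcal{A}^{\otimes k}:\mathcal{B}^{\otimes k}$). *)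

(* Finite-dimensional complex Hilbert spaces are modelled as
   functions  I -> C  on a finite index type I (the computational basis),
   operators as kernels  I -> I -> C  (matrix entries <s|E|t> = E s t),
   over an arbitrary numClosedFieldType C (e.g. algC, complex numbers). *)
From HB Require Import structures.
From mathcomp Require Import all_boot all_order all_algebra.
Set Implicit Arguments. Unset Strict Implicit. Unset Printing Implicit Defensive.
Import Order.TTheory GRing.Theory Num.Theory.
Local Open Scope ring_scope.

Section QInfo.
Variable C : numClosedFieldType.

Definition inner (I : finType) (x y : I -> C) : C := \sum_t (x t)^* * y t.

Definition apply_op (I : finType) (E : I -> I -> C) (v : I -> C) : I -> C :=
  fun s => \sum_t E s t * v t.

Definition psd (I : finType) (E : I -> I -> C) : Prop :=
  (forall s t, E s t = (E t s)^*) /\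
  (forall v : I -> C, 0 <= \sum_s \sum_t (v s)^* * E s t * v t).

(* Partial transpose on the second factor:
   (|i><k| (x) |j><l|)^{T_B} = |i><k| (x) |l><j|, i.e.
   E^{T_B}[(a,b),(a',b')] = E[(a,b'),(a',b)]. *)
Definition ptransB (IA IB : finType) (E : (IA * IB) -> (IA * IB) -> C) :
  (IA * IB) -> (IA * IB) -> C :=
  fun x y => E (x.1, y.2) (y.1, x.2).

Definition PPT (IA IB : finType) (E : (IA * IB) -> (IA * IB) -> C) : Prop :=
  psd E /\ psd (ptransB E).

Definition span (I : finType) (P : (I -> C) -> Prop) (w : I -> C) : Prop :=
  exists (r : nat) (c : 'I_r -> C) (g : 'I_r -> (I -> C)),
    (forall i, P (g i)) /\
    w = (fun t => \sum_(i < r) c i * g i t).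

Definition orth (I : finType) (P : (I -> C) -> Prop) (v : I -> C) : Prop :=
  forall w, P w -> inner w v = 0.

Definition supp_in_orth (I : finType) (E : I -> I -> C) (V : (I -> C) -> Prop)
  : Prop := forall u, orth V (apply_op E u).

Definition PPT_extendible (IA IB : finType) (V : (IA * IB -> C) -> Prop) : Prop :=
  exists E : (IA * IB) -> (IA * IB) -> C,
    E <> (fun _ _ => 0) /\ PPT E /\ supp_in_orth E V.

(* Tensor product v_1 (x) ... (x) v_k of vectors in A (x) B, viewed as a
   vector of A^{(x)k} (x) B^{(x)k} (factors regrouped for the bipartition
   A^{(x)k} : B^{(x)k}). *)
Definition tensorvec (IA IB : finType) (k : nat) (vs : 'I_k -> (IA * IB -> C)) :
  {ffun 'I_k -> IA} * {ffun 'I_k -> IB} -> C :=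
  fun ab => \prod_(i < k) vs i (ab.1 i, ab.2 i).

Definition tensor_pow (IA IB : finType) (k : nat) (V : (IA * IB -> C) -> Prop) :
  ({ffun 'I_k -> IA} * {ffun 'I_k -> IB} -> C) -> Prop :=
  span (fun w => exists vs : 'I_k -> (IA * IB -> C),
                   (forall i, V (vs i)) /\ w = tensorvec vs).

Definition strongly_PPT_unextendible (IA IB : finType)
  (V : (IA * IB -> C) -> Prop) : Prop :=
  forall k : nat, (0 < k)%N -> ~ PPT_extendible (@tensor_pow IA IB k V).

Definition Sgen (m n : nat) (j k : nat) : 'I_m * 'I_n -> C :=
  fun ab => ((((ab.1 : nat) == j) && ((ab.2 : nat) == k.+1))%:R
            - (((ab.1 : nat) == j.+1) && ((ab.2 : nat) == k)) %:R).

Definition Sspace (m n : nat) : ('I_m * 'I_n -> C) -> Prop :=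
  span (fun w => exists j k, (j.+1 < m)%N /\ (k.+1 < n)%N /\ w = @Sgen m n j k).

End QInfo.

From Pilot Require Import Defs.
From mathcomp Require Import all_boot all_order all_algebra.
From mathcomp Require Import ring zify.
From Stdlib Require Import FunctionalExtensionality.
Set Implicit Arguments. Unset Strict Implicit. Unset Printing Implicit Defensive.
Import Order.TTheory GRing.Theory Num.Theory.

(* The vectors h_d = sum_(a + b = d) |a>|b> are orthogonal to S, so for a PPT
   operator E whose support is orthogonal to (S^perp)^(x)k, testing against
   the tensor products of the h_d shows that for every basis vector x = (a, b)
   the entries E s x over the level of x (s.1 + s.2 = a + b componentwise) sum
   to zero.  Weigh x by code a + code b, with code the base-m value.  For s <> x
   on the level of x, E s x is the entry of E^T_B at ((s.1, b), (a, s.2)), and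
   one of these two indices is strictly lighter than x, because the two weight
   differences cancel and code is injective.  A psd matrix with a zero diagonal
   entry has a zero row and column, so induction on the weight makes the
   diagonal of E vanish, hence E = 0. *)

Definition base_val (N k : nat) (c : 'I_k -> nat) : nat :=
  \sum_(i < k) c i * N ^ i.

Lemma base_valD N k (c c' : 'I_k -> nat) :
  base_val N (fun i => c i + c' i) = base_val N c + base_val N c'.
Proof.
by rewrite /base_val -big_split; apply: eq_bigr => i _; rewrite mulnDl.
Qed.

Lemma base_val_recl N k (c : 'I_k.+1 -> nat) :
  base_val N c = c ord0 + N * base_val N (fun i => c (lift ord0 i)).
Proof.
rewrite /base_val big_ord_recl muln1 big_distrr /=.
by congr (_ + _); apply: eq_bigr => i _; rewrite expnS mulnCA.
Qed.

Lemma base_val_inj N k (c c' : 'I_k -> nat) :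
  (forall i, c i < N) -> (forall i, c' i < N) ->
  base_val N c = base_val N c' -> c =1 c'.
Proof.
elim: k c c' => [|k IH] c c' ltcN ltc'N; first by move=> _ [].
rewrite !base_val_recl => eq_val.
have eq0 : c ord0 = c' ord0.
  move/(congr1 (modn^~ N)): eq_val.
  by rewrite /= !(addnC (_ ord0)) !(mulnC N) !modnMDl !modn_small.
move: eq_val; rewrite eq0 => /addnI /eqP; rewrite eqn_pmul2l; last first.
  exact: leq_ltn_trans (ltcN ord0).
move/eqP/IH => eq_lift i.
by case: (unliftP ord0 i) => [j ->|->]; [apply: eq_lift|].
Qed.

Lemma base_val_descent N k (a a' b b' : 'I_k -> nat) :
  (forall i, a i < N) -> (forall i, a' i < N) ->
  (forall i, a' i + b' i = a i + b i) -> ~ a' =1 a ->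
  base_val N a' < base_val N a \/ base_val N b' < base_val N b.
Proof.
move=> ltaN lta'N eq_sum neq_a.
have : base_val N a' + base_val N b' = base_val N a + base_val N b.
  by rewrite -!base_valD; apply: eq_bigr => i _; rewrite eq_sum.
have : base_val N a' != base_val N a by apply/eqP => /(base_val_inj lta'N ltaN).
lia.
Qed.

Section WeightDescent.
Variables m n k : nat.
Implicit Types s x : {ffun 'I_k -> 'I_m} * {ffun 'I_k -> 'I_n}.

Definition same_level : rel ({ffun 'I_k -> 'I_m} * {ffun 'I_k -> 'I_n}) :=
  fun s x => [forall i, s.1 i + s.2 i == x.1 i + x.2 i].

Definition weight x : nat :=
  base_val m (fun i => x.1 i : nat) + base_val m (fun i => x.2 i : nat).

Lemma weight_descent s x : same_level s x -> s != x ->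
  weight (s.1, x.2) < weight x \/ weight (x.1, s.2) < weight x.
Proof.
case: s x => [a' b'] [a b] /forallP /= level_eq neq.
have sum_eq i : a' i + b' i = a i + b i by apply/eqP/level_eq.
have : ~ (fun i => a' i : nat) =1 (fun i => a i : nat).
  move=> eq_a; have eq_b : b' = b.
    apply/ffunP => i; apply/val_inj/(@addnI (a i)).
    by rewrite -[in LHS]eq_a sum_eq.
  move/negP: neq; apply; rewrite eq_b xpair_eqE eqxx andbT.
  by apply/eqP/ffunP => i; apply/val_inj/eq_a.
move/(base_val_descent (fun i => ltn_ord (a i)) (fun i => ltn_ord (a' i))
  sum_eq).
rewrite /weight /=; lia.
Qed.

End WeightDescent.

Local Open Scope ring_scope.

Section PositiveSemidefinite.
Variables (C : numClosedFieldType) (T : finType).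
Implicit Types (F : T -> T -> C) (x y : T).

Lemma sum_delta (p : T) (G : T -> C) : \sum_t (t == p)%:R * G t = G p.
Proof.
rewrite (bigD1 p) //= eqxx mul1r big1 ?addr0 // => t /negbTE ->.
by rewrite mul0r.
Qed.

Lemma qform_pair F x y (al be : C) :
  let v s := (s == x)%:R * al + (s == y)%:R * be in
  \sum_s \sum_t (v s)^* * F s t * v t =
  al^* * al * F x x + al^* * be * F x y + be^* * al * F y x + be^* * be * F y y.
Proof.
move=> v; have row s : \sum_t (v s)^* * F s t * v t =
    (v s)^* * (F s x * al + F s y * be).
  rewrite (eq_bigr (fun t => (t == x)%:R * ((v s)^* * F s t * al) +
    (t == y)%:R * ((v s)^* * F s t * be))).
    by rewrite big_split /= !sum_delta; ring.
  by move=> t _; rewrite /v; ring.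
rewrite (eq_bigr _ (fun s _ => row s)).
rewrite (eq_bigr (fun s => (s == x)%:R * (al^* * (F s x * al + F s y * be)) +
    (s == y)%:R * (be^* * (F s x * al + F s y * be)))); last first.
  by move=> s _; rewrite /v rmorphD !rmorphM /= !conjC_nat; ring.
by rewrite big_split /= !sum_delta; ring.
Qed.

Lemma psd_diag_ge0 F y : psd F -> 0 <= F y y.
Proof.
case=> _ /(_ (fun s => (s == y)%:R * 0 + (s == y)%:R * 1)).
by rewrite qform_pair conjC0 conjC1 !(mul0r, mul1r, add0r).
Qed.

Lemma psd_row_eq0 F x y : psd F -> F x x = 0 -> F x y = 0.
Proof.
move=> psdF Fxx; apply/eqP/negPn/negP => p_neq0.
have [herm pos] := psdF.
set q := F y y + 1; set al := - q / (F x y)^*.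
have q_gt0 : 0 < q by rewrite ltr_wpDl ?psd_diag_ge0.
have conj_al : al^* = - q / F x y.
  rewrite /al fmorph_div rmorphN; congr (- _ / _).
    exact: geC0_conj (ltW q_gt0).
  exact: conjCK.
have pc_neq0 : (F x y)^* != 0 by rewrite conjC_eq0.
have := pos (fun s => (s == x)%:R * al + (s == y)%:R * 1).
rewrite qform_pair Fxx conj_al conjC1 (herm y x).
have -> : - q / F x y * al * 0 + - q / F x y * 1 * F x y + 1 * al * (F x y)^*
    + 1 * 1 * F y y = - (q + 1).
  by rewrite /al /q; field; apply/andP.
by rewrite oppr_ge0 lt_geF // ltr_wpDl ?ltW.
Qed.

Lemma psd_col_eq0 F x y : psd F -> F y y = 0 -> F x y = 0.
Proof. by move=> psdF Fyy; rewrite psdF.1 (psd_row_eq0 x psdF Fyy) conjC0. Qed.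

Lemma psd_eq0 F : psd F -> (forall x, F x x = 0) -> F = (fun _ _ => 0).
Proof.
move=> psdF diag0; apply: functional_extensionality => x.
by apply: functional_extensionality => y; apply: psd_row_eq0.
Qed.

End PositiveSemidefinite.

Section PPTDescent.
Variables (C : numClosedFieldType) (IA IB : finType).
Variable E : IA * IB -> IA * IB -> C.
Variables (level : rel (IA * IB)) (phi : IA * IB -> nat).
Hypothesis E_PPT : PPT E.
Hypothesis level_refl : reflexive level.
Hypothesis level_sum_eq0 : forall x, \sum_(s | level s x) E s x = 0.
Hypothesis phi_descent : forall s x, level s x -> s != x ->
  (phi (s.1, x.2) < phi x)%N \/ (phi (x.1, s.2) < phi x)%N.

Lemma PPT_diag_eq0 x : E x x = 0.
Proof.
have [_ ET_psd] := E_PPT.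
suff: forall p x, phi x = p -> E x x = 0 by apply.
elim/ltn_ind => p IH {}x phi_x.
have := level_sum_eq0 x; rewrite (bigD1 x) ?level_refl //= big1 ?addr0 //.
move=> s /andP [level_sx s_neq_x].
have <- : ptransB E (s.1, x.2) (x.1, s.2) = E s x.
  by rewrite /ptransB /= -!surjective_pairing.
case: (phi_descent level_sx s_neq_x) => [lt_phi|lt_phi].
- by apply: psd_row_eq0 ET_psd _; apply: (IH _ _ _ erefl); rewrite -phi_x.
- by apply: psd_col_eq0 ET_psd _; apply: (IH _ _ _ erefl); rewrite -phi_x.
Qed.

End PPTDescent.

Section AntidiagonalVectors.
Variable C : numClosedFieldType.

Lemma span_mem (I : finType) (P : (I -> C) -> Prop) w : P w -> Defs.span P w.
Proof.
exists 1%N, (fun _ => 1), (fun _ => w); split=> //.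
by apply: functional_extensionality => t; rewrite big_ord1 mul1r.
Qed.

Lemma orth_span (I : finType) (P : (I -> C) -> Prop) v :
  orth P v -> orth (Defs.span P) v.
Proof.
move=> orthPv w [r [c [g [Pg ->]]]]; rewrite /inner.
under eq_bigr do rewrite rmorph_sum mulr_suml.
rewrite exchange_big big1 // => i _.
rewrite (eq_bigr (fun t => (c i)^* * ((g i t)^* * v t))) => [|t _].
  by rewrite -mulr_sumr -/(inner (g i) v) (orthPv _ (Pg i)) mulr0.
by rewrite rmorphM mulrA.
Qed.

Lemma supp_in_orth_col (I : finType) (E : I -> I -> C) V w y :
  supp_in_orth E V -> V w -> \sum_s (w s)^* * E s y = 0.
Proof.
move=> suppE Vw; rewrite -[RHS](suppE (fun t => (t == y)%:R) w Vw).
rewrite /inner; apply: eq_bigr => s _; rewrite /apply_op -[E s y]sum_delta.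
by under eq_bigr do rewrite mulrC.
Qed.

Definition antidiag m n (d : nat) : 'I_m * 'I_n -> C :=
  fun ab => ((ab.1 + ab.2)%N == d)%:R.

Lemma orth_Sspace_antidiag m n d : orth (@Sspace C m n) (antidiag d).
Proof.
apply: orth_span => _ [j [k [ltjm [ltkn ->]]]].
have Sgen_delta : @Sgen C m n j k = fun t =>
    (t == (Ordinal (ltnW ltjm), Ordinal ltkn))%:R
    - (t == (Ordinal ltjm, Ordinal (ltnW ltkn)))%:R.
  by apply: functional_extensionality => -[a b]; rewrite /Sgen !xpair_eqE.
rewrite /inner Sgen_delta.
under eq_bigr do rewrite rmorphB /= !conjC_nat mulrBl.
by rewrite sumrB !sum_delta /antidiag /= addnS addSn subrr.
Qed.

Lemma tensorvec_antidiag m n k (d : 'I_k -> nat) s :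
  tensorvec (fun i => @antidiag m n (d i)) s =
  [forall i, (s.1 i + s.2 i)%N == d i]%:R.
Proof.
rewrite /tensorvec.
case: (boolP [forall i, _]) => [/forallP level_d | /forallPn [i neq_i]].
  by rewrite big1 // => i _; rewrite /antidiag level_d.
by rewrite (bigD1 i) //= /antidiag (negbTE neq_i) mul0r.
Qed.

Lemma same_level_sum_eq0 m n k (E : _ -> _ -> C) x y :
  supp_in_orth E (@tensor_pow C _ _ k (orth (@Sspace C m n))) ->
  \sum_(s | same_level s x) E s y = 0.
Proof.
move=> suppE; pose w := tensorvec (fun i => @antidiag m n (x.1 i + x.2 i)%N).
have Pw : @tensor_pow C _ _ k (orth (@Sspace C m n)) w.
  apply: span_mem; exists (fun i => antidiag (x.1 i + x.2 i)).
  by split=> // i; apply: orth_Sspace_antidiag.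
rewrite big_mkcond /= -[RHS](supp_in_orth_col y suppE Pw).
apply: eq_bigr => s _; rewrite /w /same_level tensorvec_antidiag conjC_nat.
by case: [forall _, _]; rewrite ?mul1r ?mul0r.
Qed.

End AntidiagonalVectors.

Theorem theorem3 (C : numClosedFieldType) (m n : nat) :
  (2 <= m)%N -> (m <= n)%N ->
  strongly_PPT_unextendible (orth (@Sspace C m n)).
Proof.
move=> _ _ k _ [E [E_neq0 [E_PPT E_supp]]]; apply: E_neq0.
apply: (psd_eq0 E_PPT.1) => x.
apply: (PPT_diag_eq0 (level := @same_level m n k) (phi := @weight m n k) E_PPT).
- by move=> y; apply/forallP.
- by move=> y; apply: same_level_sum_eq0.
- exact: weight_descent.
Qed.
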